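(* Let $\mathcal{L}$ be a set of points in $\mathrm{PG}(k-1,q)$, identified with one-dimensional vector subspaces (lines through the origin) of $\mathbb{F}_q^k$. Then $\mathcal{L}$ is a strong $(s-1)$-blocking set if and only if the set $B=\bigcup_{\ell\in\mathcal{L}}\ell\subseteq\mathbb{F}_q^k$ is an affine $s$-blocking set.
   Context: $\mathrm{PG}(k-1,q)$ is the projective space whose points, lines, ..., hyperplanes are the $1$-, $2$-, ..., $(k-1)$-dimensional vector subspaces of $\mathbb{F}_q^k$; codimension of a projective subspace equals the codimension of the corresponding vector subspace. For a set $S$ of points, $\langle S\rangle$ is the subspace they span. A strong $t$-blocking set in $\mathrm{PG}(k-1,q)$ is a set of points that meets every codimension-$t$ subspace in a set of points spanning that subspace. An affine $s$-blocking set in $\mathbb{F}_q^k$ is a set of points containing at least one point of every affine subspace (translate of a vector subspace) of dimension $k-s$. *)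

From HB Require Import structures.
From mathcomp Require Import all_boot all_order all_algebra all_field.
Set Implicit Arguments. Unset Strict Implicit. Unset Printing Implicit Defensive.
Import GRing.Theory.
Local Open Scope ring_scope.

Definition is_point (F : finFieldType) (k : nat) (P : {vspace 'rV[F]_k}) : bool :=
  \dim P == 1%N.

(* Span of the points of L lying in W: every point P is <[v]> for any
   nonzero v in P, so summing <[v]> over vectors v in W with <[v]> in L
   is the span of the points of L contained in W. *)
Definition span_of_points_in (F : finFieldType) (k : nat)
    (L : pred {vspace 'rV[F]_k}) (W : {vspace 'rV[F]_k}) : {vspace 'rV[F]_k} :=
  (\sum_(v : 'rV[F]_k | (<[v]>%VS \in L) && (v \in W)) <[v]>)%VS.

Definition strong_blocking (F : finFieldType) (k t : nat)
    (L : pred {vspace 'rV[F]_k}) : Prop :=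
  forall W : {vspace 'rV[F]_k}, \dim W = (k - t)%N ->
    span_of_points_in L W = W.

Definition union_points (F : finFieldType) (k : nat)
    (L : pred {vspace 'rV[F]_k}) (v : 'rV[F]_k) : Prop :=
  exists P : {vspace 'rV[F]_k}, P \in L /\ v \in P.

Definition affine_blocking (F : finFieldType) (k s : nat)
    (B : 'rV[F]_k -> Prop) : Prop :=
  forall (U : {vspace 'rV[F]_k}) (a : 'rV[F]_k), \dim U = (k - s)%N ->
    exists u : 'rV[F]_k, u \in U /\ B (a + u).

From HB Require Import structures.
From mathcomp Require Import all_boot all_order all_algebra all_field.
From mathcomp Require Import zify.
Set Implicit Arguments. Unset Strict Implicit. Unset Printing Implicit Defensive.
Local Open Scope ring_scope.
Import GRing.Theory.

(* Write s = t + 1.  If L is strong t-blocking and a + U is an affine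
   subspace with dim U = k - t - 1, take W of dimension k - t containing U
   and a.  The points of L in W span W, so one of them, <[v]>, is not in U;
   then W = U + <[v]>, and writing a = u + w with u in U and w in <[v]>
   puts a - u in the union.  Conversely, if the points of L in some W of
   dimension k - t spanned a proper subspace S of W, enlarge S to a
   hyperplane U of W and pick a in W \ U: the affine subspace a + U lies in
   W \ U, so the vector it shares with the union spans a point of L inside
   W but outside S, a contradiction. *)

Section VspaceDimension.

Variables (K : fieldType) (vT : vectType K).
Implicit Types (S U W : {vspace vT}) (v : vT).

Lemma dimv_addv_line_le S v : (\dim (S + <[v]>) <= (\dim S).+1)%N.
Proof.
apply: leq_trans (dimv_add_leqif S <[v]>) _.
by rewrite dim_vline -addn1 leq_add2l leq_b1.
Qed.

Lemma dimv_addv_line S v : v \notin S -> \dim (S + <[v]>) = (\dim S).+1.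
Proof.
move=> vNS; apply/eqP; rewrite eqn_leq dimv_addv_line_le /=.
rewrite (ltn_leqif (dimv_leqif_sup (addvSl S <[v]>))) subv_add subvv /=.
by rewrite -memvE.
Qed.

Lemma addv_line_eq U W v :
  (U <= W)%VS -> v \in W -> v \notin U -> \dim W = (\dim U).+1 ->
  (U + <[v]>)%VS = W.
Proof.
move=> UW vW vNU dimW; apply/eqP.
rewrite eqEdim subv_add UW -memvE vW /=.
by rewrite (dimv_addv_line vNU) dimW.
Qed.

Lemma exists_subv_dimv S W n :
  (S <= W)%VS -> (\dim S <= n <= \dim W)%N ->
  exists2 U, (S <= U)%VS && (U <= W)%VS & \dim U = n.
Proof.
have [m Em] : exists m, (n - \dim S)%N = m by eexists.
elim: m S Em => [|m IHm] S Em SW /andP[Sn nW].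
  by exists S; rewrite ?SW ?subvv //; lia.
have /subvPn[v vW vNS] : ~~ (W <= S)%VS by apply/negP => /dimvS; lia.
have dimSv := dimv_addv_line vNS.
have [|||U /andP[SvU UW] dimU] := IHm (S + <[v]>)%VS.
- lia.
- by rewrite subv_add SW -memvE.
- by rewrite dimSv; apply/andP; split; lia.
by exists U; rewrite ?UW ?(subv_trans (addvSl _ _) SvU).
Qed.

End VspaceDimension.

Lemma dimv_full_rV (F : fieldType) (k : nat) :
  \dim (fullv : {vspace 'rV[F]_k}) = k.
Proof. by rewrite dimvf /dim /= mul1n. Qed.

Section PointsInSubspace.

Variables (F : finFieldType) (k : nat) (L : pred {vspace 'rV[F]_k}).
Implicit Types (U W P : {vspace 'rV[F]_k}) (v : 'rV[F]_k).

Lemma point_eq_vline P v : is_point P -> v \in P -> v != 0 -> P = <[v]>%VS.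
Proof.
move=> /eqP dimP vP v_neq0; apply/eqP.
by rewrite eq_sym eqEdim -memvE vP dim_vline v_neq0 dimP.
Qed.

Lemma span_of_points_in_subP W U :
  reflect (forall v, <[v]>%VS \in L -> v \in W -> v \in U)
          (span_of_points_in L W <= U)%VS.
Proof.
apply: (iffP subv_sumP) => [sLU v vL vW | sLU v /andP[vL vW]].
  by rewrite memvE sLU ?vL.
by rewrite -memvE sLU.
Qed.

Lemma span_of_points_in_sub W : (span_of_points_in L W <= W)%VS.
Proof. by apply/span_of_points_in_subP. Qed.

Lemma mem_span_of_points_in W v :
  <[v]>%VS \in L -> v \in W -> v \in span_of_points_in L W.
Proof. exact/span_of_points_in_subP/subvv. Qed.

Lemma span_of_points_inPn W U :
  ~~ (span_of_points_in L W <= U)%VS ->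
  exists2 v, (<[v]>%VS \in L) && (v \in W) & v \notin U.
Proof.
move=> sLNU.
have [v /andP[/andP[vL vW] vNU] | noV] :=
  pickP [pred v | (<[v]>%VS \in L) && (v \in W) && (v \notin U)].
  by exists v; rewrite ?vL.
case/negP: sLNU; apply/span_of_points_in_subP => v vL vW.
by apply: contraFT (noV v) => vNU /=; rewrite vL vW.
Qed.

End PointsInSubspace.

Section Blocking.

Variables (F : finFieldType) (k t : nat) (L : pred {vspace 'rV[F]_k}).
Hypothesis t_lt_k : (t < k)%N.

Lemma strong_blocking_affine_blocking :
  strong_blocking t L -> affine_blocking t.+1 (union_points L).
Proof.
move=> blockL U a dimU.
have [W /andP[UaW _] dimW] :
    exists2 W, (U + <[a]> <= W)%VS && (W <= fullv)%VS & \dim W = (k - t)%N.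
  apply: exists_subv_dimv (subvf _) _; rewrite dimv_full_rV.
  apply/andP; split; last lia.
  by rewrite -(subnSK t_lt_k) -dimU; exact: dimv_addv_line_le.
have UW : (U <= W)%VS := subv_trans (addvSl U <[a]>) UaW.
have aW : a \in W by rewrite memvE (subv_trans (addvSr U <[a]>) UaW).
have [v /andP[vL vW] vNU] : exists2 v, (<[v]>%VS \in L) && (v \in W) & v \notin U.
  by apply: span_of_points_inPn; rewrite blockL //; apply/negP => /dimvS; lia.
have UvW : (U + <[v]>)%VS = W by apply: addv_line_eq; rewrite ?dimW ?dimU //; lia.
move: aW; rewrite -UvW => /memv_addP[u uU [w wv aE]].
exists (- u); split; first by rewrite rpredN.
by exists <[v]>%VS; rewrite aE addrC addKr.
Qed.

Lemma affine_blocking_strong_blocking :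
  (forall P, P \in L -> is_point P) ->
  affine_blocking t.+1 (union_points L) -> strong_blocking t L.
Proof.
move=> pointsL blockB W dimW.
have SW := span_of_points_in_sub L W.
apply/eqP; rewrite eqEdim SW /= leqNgt; apply/negP => ltSW.
have [U /andP[SU UW] dimU] : exists2 U,
    (span_of_points_in L W <= U)%VS && (U <= W)%VS & \dim U = (k - t.+1)%N.
  by apply: exists_subv_dimv SW _; apply/andP; split; lia.
have /subvPn[a aW aNU] : ~~ (W <= U)%VS by apply/negP => /dimvS; lia.
have [u [uU [P [PL auP]]]] := blockB U a dimU.
have auW : a + u \in W by rewrite memvD // (subvP UW).
have auNU : a + u \notin U.
  by apply: contra aNU => auU; rewrite -(addrK u a) memvB.
have au_neq0 : a + u != 0 by apply: contraNneq auNU => ->; rewrite mem0v.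
have auL : <[a + u]>%VS \in L by rewrite -(point_eq_vline (pointsL P PL) auP).
by case/negP: auNU; apply: (subvP SU); apply: mem_span_of_points_in.
Qed.

End Blocking.

Theorem lemma1p2 (F : finFieldType) (k s : nat)
    (L : pred {vspace 'rV[F]_k})
    (HL : forall P, P \in L -> is_point P)
    (Hs1 : (1 <= s)%N) (Hsk : (s <= k)%N) :
  @strong_blocking F k (s - 1)%N L <-> @affine_blocking F k s (@union_points F k L).
Proof.
case: s Hs1 Hsk => // t _ t_lt_k; rewrite subn1 /=.
split; first exact: strong_blocking_affine_blocking.
exact: affine_blocking_strong_blocking.
Qed.
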